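(* Let $(\mathcal{X},\rho,\nu)$ be a bounded length space with finite doubling dimension and a finite Borel measure $\nu$. Let $\eta\in\mathcal{F}_0$, and let $\mathfrak{b}=\mathfrak{b}(\partial_\eta\mathcal{X})$ and $\mathfrak{m}=\mathfrak{m}(\partial_\eta\mathcal{X})$. Then for any $c_1,c_2>0$ there are constants $C>0$ and $r_0>0$ such that for all $0<r<r_0$, \[\mathcal{N}_{\mathrm{ML},\eta}(V_r)\le C r^{-(\mathfrak{b}+c_1)}\qquad\text{and}\qquad\nu(V_r^c)\le(\mathfrak{m}+c_2)\, r,\] where $V_r=\{x\in\mathcal{X}:\mathrm{margin}_\eta(x)\ge r\}$.
   Context: A length space: $\rho(x,x')=\inf_\gamma\ell(\gamma)$ over continuous paths from $x$ to $x'$. Finite doubling dimension $d$: every open ball $B(x,r)$ can be covered by $2^d$ balls of radius $r/2$. $\mathrm{margin}_\eta(x)=\inf\{\rho(x,x'):\eta(x')\ne\eta(x)\}$; $\partial_\eta\mathcal{X}=\{x:\mathrm{margin}_\eta(x)=0\}$; $\mathcal{F}_0$ = measurable $\eta$ with $\nu(\partial_\eta\mathcal{X})=0$. A set $U$ is mutually-labeling for $\eta$ if $\sup_{z,z'\in U}\rho(z,z')<\mathrm{margin}_\eta(x)$ for all $x\in U$; $\mathcal{N}_{\mathrm{ML},\eta}(V)$ is the minimal number of mutually-labeling sets covering $V$. $\mathcal{N}_r(A)$ is the minimal number of radius-$r$ balls covering $A$; $\mathfrak{b}(A)=\limsup_{r\to0}\log\mathcal{N}_r(A)/\log(1/r)$;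 $A^r=\bigcup_{x\in A}B(x,r)$; $\mathfrak{m}(A)=\limsup_{r\to0}(\nu(A^r)-\nu(A))/r$. *)

From HB Require Import structures.
From mathcomp Require Import all_boot all_order all_algebra.
From mathcomp Require Import all_classical all_reals all_analysis.
Set Implicit Arguments. Unset Strict Implicit. Unset Printing Implicit Defensive.
Import Order.TTheory GRing.Theory Num.Theory.
Local Open Scope classical_set_scope.
Local Open Scope ring_scope.

Section Defs.
Context {R : realType} {X : Type}.
Variable rho : X -> X -> R.

Definition is_metric : Prop :=
  [/\ (forall x y, 0 <= rho x y),
      (forall x y, rho x y = 0 <-> x = y),
      (forall x y, rho x y = rho y x) &
      (forall x y z, rho x z <= rho x y + rho y z)].

Definition rball (x : X) (r : R) : set X := [set y | rho x y < r].

Definition ropen (A : set X) : Prop :=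
  forall x, A x -> exists2 e, 0 < e & rball x e `<=` A.

Definition bounded_space : Prop := exists D : R, forall x y, rho x y <= D.

(* continuity of a path g : [0,1] -> X (only values on [0,1] matter) *)
Definition path_continuous (g : R -> X) : Prop :=
  forall t, 0 <= t <= 1 -> forall e, 0 < e ->
    exists2 d, 0 < d & forall s, 0 <= s <= 1 -> `|s - t| < d -> rho (g t) (g s) < e.

Definition path_length (g : R -> X) : \bar R :=
  ereal_sup [set l | exists (n : nat) (t : nat -> R),
    [/\ t 0%N = 0, t n = 1, (forall i, (i < n)%N -> t i <= t i.+1) &
        l = (\sum_(i < n) rho (g (t i)) (g (t i.+1)))%:E]].

Definition length_space : Prop :=
  forall x x', (rho x x')%:E =
    ereal_inf [set l | exists g, [/\ path_continuous g, g 0 = x, g 1 = x' &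
                                      l = path_length g]].

Definition finite_doubling_dimension : Prop :=
  exists d : nat, forall x (r : R), 0 < r ->
    exists c : nat -> X, rball x r `<=` \bigcup_(i in `I_(2 ^ d)) rball (c i) (r / 2).

(* margin_eta(x) = inf { rho(x,x') : eta x' <> eta x }  (inf of empty = +oo) *)
Definition margin {Y : Type} (eta : X -> Y) (x : X) : \bar R :=
  ereal_inf [set (rho x x')%:E | x' in [set x' | eta x' <> eta x]].

Definition boundary {Y : Type} (eta : X -> Y) : set X :=
  [set x | margin eta x = 0%E].

Definition mutually_labeling {Y : Type} (eta : X -> Y) (U : set X) : Prop :=
  forall x, U x ->
    (ereal_sup [set l | exists z z', [/\ U z, U z' & l = (rho z z')%:E]]
       < margin eta x)%E.

(* N_ML(V): minimal number of mutually labeling sets covering V (+oo if none) *)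
Definition N_ML {Y : Type} (eta : X -> Y) (V : set X) : \bar R :=
  ereal_inf [set (n%:R)%:E | n in [set n : nat | exists U : nat -> set X,
     (forall i, (i < n)%N -> mutually_labeling eta (U i)) /\
     V `<=` \bigcup_(i in `I_n) U i]].

(* N_r(A): minimal number of radius-r balls covering A (+oo if none) *)
Definition covnum (A : set X) (r : R) : \bar R :=
  ereal_inf [set (n%:R)%:E | n in [set n : nat | exists c : nat -> X,
     A `<=` \bigcup_(i in `I_n) rball (c i) r]].

Definition limsup0 (f : R -> \bar R) : \bar R :=
  ereal_inf [set ereal_sup [set f r | r in [set r | 0 < r < d]] | d in [set d | 0 < d]].

(* upper box-counting dimension b(A) = limsup_{r->0} log N_r(A) / log(1/r);
   convention: N_r is counted as max(1, N_r), so that b(emptyset) = 0 *)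
Definition bdim (A : set X) : \bar R :=
  limsup0 (fun r => (lne (Order.max 1%E (covnum A r)) * ((ln r^-1)^-1)%:E)%E).

Definition enlarge (A : set X) (r : R) : set X := \bigcup_(x in A) rball x r.

Definition mdim (nu : set X -> \bar R) (A : set X) : \bar R :=
  limsup0 (fun r => ((nu (enlarge A r) - nu A) * (r^-1)%:E)%E).

End Defs.

Definition rpowe {R : realType} (r : R) (e : \bar R) : \bar R :=
  expeR (e * (ln r)%:E)%E.

(* If margin(x) < s, there is a path of length < s from x to a point of
   another label, and the first point where it changes label lies on the
   boundary; so every point of margin < s is within s of the boundary.
   Hence the band {t <= margin < 2t} is covered by the N_{2t} balls covering
   the boundary, enlarged to radius 4t; four halvings by the doubling property
   give N_{2t} 2^(4d) balls of radius t/4, and each of them is mutually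
   labeling because its diameter t/2 is below the margin of its points.
   Summing over the dyadic scales t = 2^k r below a fixed tau, with
   N_s < s^-(b + c1) for small s, gives a geometric series dominated by the
   finest scale r, while the points of margin >= tau need a fixed number of
   sets. For the measure bound, {margin < r} lies in the r-enlargement of the
   null set boundary, whose measure is at most (m + c2) r for small r. *)

From HB Require Import structures.
From mathcomp Require Import all_boot all_order all_algebra.
From mathcomp Require Import all_classical all_reals all_analysis.
From mathcomp Require Import lra.
Import Order.TTheory GRing.Theory Num.Theory.
Local Open Scope classical_set_scope.
Local Open Scope ring_scope.

Lemma exists_pow2_ge {R : realType} (x r : R) : 0 < r ->
  exists K : nat, x <= 2 ^+ K * r.
Proof.
move=> r_gt0; have xr_ge0 : 0 <= Num.max (x / r) 0 by rewrite le_max lexx orbT.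
exists (Num.Def.archi_bound (Num.max (x / r) 0)).
have := archi_boundP xr_ge0; set K := Num.Def.archi_bound _ => xrK.
have K_le : (K%:R : R) <= 2 ^+ K by rewrite -natrX ler_nat ltnW // ltn_expl.
rewrite -ler_pdivrMr //; apply: le_trans K_le; apply: le_trans (ltW xrK).
by rewrite le_max lexx.
Qed.

Lemma rpoweE {R : realType} (r x : R) : 0 < r -> rpowe r x%:E = (r `^ x)%:E.
Proof. by move=> r_gt0; rewrite /rpowe /powR gt_eqF. Qed.

Lemma rpoweNy {R : realType} (r : R) : 0 < r < 1 -> rpowe r -oo = +oo%E.
Proof.
by move=> r01; rewrite /rpowe mulNyr ltr0_sg ?ln_lt0 // mulN1e.
Qed.

Lemma sum_geometric_le {R : realType} (q : R) K : 0 <= q < 1 ->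
  \sum_(k < K) q ^+ k.+1 <= (1 - q)^-1.
Proof.
move=> /andP[q_ge0 q_lt1].
have -> : \sum_(k < K) q ^+ k.+1 = series (geometric q q) K.
  by rewrite /series /= big_mkord; apply: eq_bigr => k _; rewrite exprS.
rewrite geometric_seriesE ?lt_eqF //= ler_pdivrMr ?subr_gt0 //.
rewrite mulVf ?subr_eq0 ?gt_eqF //.
have : 0 <= q ^+ K <= 1 by rewrite exprn_ge0 // exprn_ile1 // ltW.
by nra.
Qed.

Lemma powR_pow2M {R : realType} (r x : R) K : 0 <= r ->
  (2 ^+ K * r) `^ x = (2 `^ x) ^+ K * r `^ x.
Proof.
move=> r_ge0; rewrite powRM ?exprn_ge0 // -powR_mulrn //.
by rewrite powRAC powR_mulrn ?powR_ge0.
Qed.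

Section Metric.
Context {R : realType} {X : Type} {rho : X -> X -> R}.
Hypothesis rho_metric : is_metric rho.

Lemma rho_ge0 x y : 0 <= rho x y. Proof. by case: rho_metric. Qed.
Lemma rhoC x y : rho x y = rho y x. Proof. by case: rho_metric. Qed.
Lemma rho_triangle x y z : rho x z <= rho x y + rho y z.
Proof. by case: rho_metric. Qed.

Section Margin.
Context {Y : Type} (eta : X -> Y).

Lemma margin_ge0 x : (0 <= margin rho eta x)%E.
Proof. by apply/ereal_infP => _ [x' _ <-]; rewrite lee_fin rho_ge0. Qed.

Lemma margin_ltP x (s : R) :
  (margin rho eta x < s%:E)%E <-> exists2 x', eta x' <> eta x & rho x x' < s.
Proof.
split; first by move=> /ereal_inf_lt[_ [x' x'x <-]]; rewrite lte_fin; exists x'.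
move=> [x' x'x xx's]; apply: le_lt_trans (_ : (rho x x')%:E < s%:E)%E => //.
by apply: ereal_inf_lbound; exists x'.
Qed.

Lemma boundary_of_close_relabel z :
  (forall e : R, 0 < e -> exists2 x', eta x' <> eta z & rho z x' < e) ->
  boundary rho eta z.
Proof.
move=> near_relabel; apply/le_anti; rewrite margin_ge0 andbT.
apply/lee_addgt0Pr => e /near_relabel; rewrite add0e -margin_ltP; exact: ltW.
Qed.

Lemma path_length_ge (g : R -> X) (t : R) : 0 <= t <= 1 ->
  ((rho (g 0) (g t))%:E <= path_length rho g)%E.
Proof.
move=> /andP[t0 t1].
pose tt i : R := if i == 0%N then 0 else if i == 1%N then t else 1.
apply: (@le_trans _ _ ((\sum_(i < 2) rho (g (tt i)) (g (tt i.+1)))%:E)).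
  by rewrite !big_ord_recr big_ord0 /= add0r lee_fin lerDl rho_ge0.
apply: ereal_sup_ubound; exists 2%N, tt; split => //.
by case=> [|[|]] //= _; rewrite /tt.
Qed.

(* The boundary point is [g ts], where [ts] is the first time the label of
   [g] differs from [eta (g 0)]. *)
Lemma path_meets_boundary (g : R -> X) : path_continuous rho g ->
  eta (g 1) <> eta (g 0) -> exists2 t, 0 <= t <= 1 & boundary rho eta (g t).
Proof.
move=> g_cont g10.
pose T := [set t : R | 0 <= t <= 1 /\ eta (g t) <> eta (g 0)].
have T1 : T 1 by split; rewrite ?ler01 ?lexx.
have T_lb : has_lbound T by exists 0 => t [/andP[]].
pose ts := inf T.
have ts0 : 0 <= ts by apply: lb_le_inf => [|t [/andP[]]]; first by exists 1.
have ts01 : 0 <= ts <= 1 by rewrite ts0 ge_inf.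
exists ts => //; apply: boundary_of_close_relabel => e e0.
have [d d0 g_near] := g_cont ts ts01 e e0.
have [g_ts|g_ts] := pselect (eta (g ts) = eta (g 0)).
- have [t [/andP[t0 t1] Tt] tlt] := inf_adherent d0 (conj (ex_intro _ 1 T1) T_lb).
  have tge : ts <= t by apply: ge_inf => //; split; rewrite ?t0.
  exists (g t); first by rewrite g_ts.
  by apply: g_near; rewrite ?t0 // ger0_norm ?subr_ge0 //; rewrite -/ts in tlt; lra.
- have ts_gt0 : 0 < ts.
    by rewrite lt_neqAle ts0 andbT; apply/eqP => ts_eq0; rewrite -ts_eq0 in g_ts.
  pose t := ts - Num.min ts d / 2.
  have [m0 m_ts m_d] : [/\ 0 < Num.min ts d, Num.min ts d <= ts
                        & Num.min ts d <= d].
    by rewrite lt_min ts_gt0 d0 !ge_min !lexx orbT.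
  have t01 : 0 <= t <= 1 by apply/andP; split; rewrite /t; lra.
  have g_t : eta (g t) = eta (g 0).
    apply: contrapT => Tt; have : ts <= t by apply: ge_inf.
    by rewrite /t; lra.
  exists (g t); first by rewrite g_t => /esym.
  by apply: g_near => //; rewrite distrC ger0_norm /t; lra.
Qed.

Lemma margin_lt_boundary x (s : R) : length_space rho ->
  (margin rho eta x < s%:E)%E -> exists2 z, boundary rho eta z & rho x z < s.
Proof.
move=> len_space /margin_ltP[x' x'x xx's].
have : ((rho x x')%:E < s%:E)%E by rewrite lte_fin.
rewrite len_space => /ereal_inf_lt[_ [g [g_cont g0 g1 ->]] g_short].
have [|t t01 bd] := @path_meets_boundary g g_cont; first by rewrite g0 g1.
exists (g t) => //; rewrite -lte_fin -g0.
by apply: le_lt_trans g_short; apply: path_length_ge.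
Qed.

Lemma setC_margin_ge (r : R) :
  ~` [set x | (r%:E <= margin rho eta x)%E] = [set x | (margin rho eta x < r%:E)%E].
Proof. by apply/seteqP; split => x /=; rewrite ltNge => /negP. Qed.

End Margin.
End Metric.

Section CoverDefs.
Context {R : realType} {X : Type} (rho : X -> X -> R) {Y : Type} (eta : X -> Y).

Definition ball_cover (A : set X) (r : R) (n : nat) : Prop :=
  exists c : nat -> X, A `<=` \bigcup_(i in `I_n) rball rho (c i) r.

Definition ml_cover (V : set X) (n : nat) : Prop :=
  exists U : nat -> set X,
    (forall i, (i < n)%N -> mutually_labeling rho eta (U i)) /\
    V `<=` \bigcup_(i in `I_n) U i.

Definition doubling_exponent (d : nat) : Prop :=
  forall x (r : R), 0 < r ->
    exists c : nat -> X,
      rball rho x r `<=` \bigcup_(i in `I_(2 ^ d)) rball rho (c i) (r / 2).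

End CoverDefs.

Section Covers.
Context {R : realType} {X : Type} {rho : X -> X -> R}.
Hypothesis rho_metric : is_metric rho.

Lemma ball_cover_sub {A B r n} : B `<=` A -> ball_cover rho A r n -> ball_cover rho B r n.
Proof. by move=> BA [c Ac]; exists c; apply: subset_trans Ac. Qed.

Lemma ball_cover_le A r1 r2 n : r1 <= r2 ->
  ball_cover rho A r1 n -> ball_cover rho A r2 n.
Proof.
move=> r12 [c Ac]; exists c => x /Ac [i i_lt x_in]; exists i => //.
by rewrite /rball /= in x_in *; lra.
Qed.

Lemma ball_cover_enlarge A B r s n : ball_cover rho A r n ->
  (forall x, B x -> exists2 z, A z & rho x z < s) -> ball_cover rho B (r + s) n.
Proof.
move=> [c Ac] B_near_A; exists c => x /B_near_A [z /Ac [i i_lt z_in] xz_lt].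
exists i => //; rewrite /rball /= in z_in *.
by have := rho_triangle rho_metric (c i) z x; rewrite (rhoC rho_metric z x); lra.
Qed.

Section Doubling.
Context {d : nat}.
Hypothesis doubling : doubling_exponent rho d.

Lemma ball_cover_half A r n : 0 < r ->
  ball_cover rho A r n -> ball_cover rho A (r / 2) (n * 2 ^ d).
Proof.
move=> r_gt0 [c Ac]; have [c' c'_cover] := choice (fun i => doubling (c i) r r_gt0).
have pow_gt0 : (0 < 2 ^ d)%N by rewrite expn_gt0.
exists (fun j => c' (j %/ 2 ^ d)%N (j %% 2 ^ d)%N).
move=> x /Ac [i i_lt /c'_cover [k k_lt x_in]]; exists (i * 2 ^ d + k)%N; last first.
  by rewrite /= divnMDl // divn_small // addn0 modnMDl modn_small.
rewrite /= in i_lt k_lt *; apply: (@leq_trans (i.+1 * 2 ^ d)%N).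
  by rewrite mulSn addnC ltn_add2r.
by rewrite leq_mul2r i_lt orbT.
Qed.

Lemma ball_cover_halfn m {A r n} : 0 < r -> ball_cover rho A r n ->
  ball_cover rho A (r / 2 ^+ m) (n * 2 ^ (d * m)).
Proof.
move=> r_gt0; elim: m => [|m IHm] Ar; first by rewrite expr0 divr1 muln0 expn0 muln1.
rewrite exprSr invfM mulrA mulnS expnD mulnA [(n * 2 ^ d * _)%N]mulnAC.
by apply: ball_cover_half; [rewrite divr_gt0 // exprn_gt0 | exact: IHm].
Qed.

Lemma bounded_ball_cover (x0 : X) {D r : R} : (forall x y, rho x y <= D) -> 0 < r ->
  exists n, ball_cover rho setT r n.
Proof.
move=> rho_le_D r_gt0.
have D_ge0 : 0 <= D by apply: le_trans (rho_le_D x0 x0); apply: rho_ge0.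
have one_ball : ball_cover rho setT (D + 1) 1.
  exists (fun=> x0) => x _; exists 0%N => //.
  by rewrite /rball /=; have := rho_le_D x0 x; lra.
have [m Dm] := exists_pow2_ge (D + 1) r r_gt0.
exists (1 * 2 ^ (d * m))%N.
apply: ball_cover_le (ball_cover_halfn m _ one_ball); last lra.
by rewrite ler_pdivrMr ?exprn_gt0 // mulrC.
Qed.

End Doubling.

Section MutuallyLabelingCovers.
Context {Y : Type} {eta : X -> Y}.

Lemma N_ML_le_cover {V n} : ml_cover rho eta V n -> (N_ML rho eta V <= n%:R%:E)%E.
Proof. by move=> Vn; apply: ereal_inf_lbound; exists n. Qed.

Lemma ml_cover_sub V W n : W `<=` V -> ml_cover rho eta V n -> ml_cover rho eta W n.
Proof. by move=> WV [U [U_ml VU]]; exists U; split => //; apply: subset_trans VU. Qed.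

Lemma ml_cover_set0 : ml_cover rho eta set0 0.
Proof. by exists (fun=> set0); split => // x. Qed.

Lemma ml_coverU {V W n m} : ml_cover rho eta V n -> ml_cover rho eta W m ->
  ml_cover rho eta (V `|` W) (n + m).
Proof.
move=> [U [U_ml VU]] [U' [U'_ml WU']].
exists (fun i => if (i < n)%N then U i else U' (i - n)%N); split.
  move=> i i_lt; case: ifP => [|/negbT]; first exact: U_ml.
  by rewrite -leqNgt => ni; apply: U'_ml; rewrite ltn_subLR.
move=> x [/VU [i i_lt x_in]|/WU' [i i_lt x_in]].
  by exists i; [exact: ltn_addr | rewrite /= i_lt].
exists (n + i)%N; first by rewrite /= ltn_add2l.
by rewrite /= ltnNge leq_addr /= addKn.
Qed.

Lemma mutually_labeling_in_ball A c r t : A `<=` rball rho c r ->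
  (forall x, A x -> (t%:E <= margin rho eta x)%E) -> 2 * r < t ->
  mutually_labeling rho eta A.
Proof.
move=> A_ball A_margin rt x Ax; apply: (@le_lt_trans _ _ (2 * r)%:E).
  apply: ge_ereal_sup => _ [z [z' [Az Az' ->]]]; rewrite lee_fin.
  have := A_ball _ Az; have := A_ball _ Az'; rewrite /rball /= => cz' cz.
  by have := rho_triangle rho_metric z c z'; rewrite (rhoC rho_metric z c); lra.
by apply: lt_le_trans (A_margin _ Ax); rewrite lte_fin.
Qed.

Lemma ball_cover_ml_cover t {A r n} : ball_cover rho A r n ->
  (forall x, A x -> (t%:E <= margin rho eta x)%E) -> 2 * r < t -> ml_cover rho eta A n.
Proof.
move=> [c Ac] A_margin rt; exists (fun i => rball rho (c i) r `&` A); split.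
  move=> i _; apply: (@mutually_labeling_in_ball _ (c i) r t) rt.
    by move=> x [].
  by move=> x [_ /A_margin].
by move=> x Ax; have [i i_lt x_in] := Ac _ Ax; exists i.
Qed.

End MutuallyLabelingCovers.
End Covers.

Section BoxDimension.
Context {R : realType} {X : Type} {rho : X -> X -> R}.

Lemma bdim_ge0 (A : set X) : (0 <= bdim rho A)%E.
Proof.
apply/ereal_infP => _ [d d_gt0 <-]; set s := Num.min d 1 / 2.
have [s_gt0 s_lt1 s_lt_d] : [/\ 0 < s, s < 1 & s < d].
  have : 0 < Num.min d 1 <= 1 by rewrite lt_min d_gt0 ltr01 ge_min lexx orbT.
  have : Num.min d 1 <= d by rewrite ge_min lexx.
  by rewrite /s; split; lra.
apply: le_trans (ereal_sup_ubound _); last by exists s => //=; rewrite s_gt0.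
rewrite mule_ge0 // ?lne_ge0 ?le_max ?lexx //.
by rewrite lee_fin invr_ge0 ltW // ln_gt0 // invf_gt1.
Qed.

Lemma ball_cover_of_bdim_lt {A : set X} {e : R} : (bdim rho A < e%:E)%E ->
  exists2 s1 : R, 0 < s1 <= 1 &
    forall s, 0 < s < s1 -> exists2 n, ball_cover rho A s n & n%:R < s `^ (- e).
Proof.
rewrite /bdim /limsup0 => /ereal_inf_lt[_ [d d_gt0 <-] sup_lt].
exists (Num.min d 1); first by rewrite lt_min d_gt0 ltr01 ge_min lexx orbT.
move=> s /andP[s_gt0]; rewrite lt_min => /andP[s_lt_d s_lt1].
have ln_gt0 : 0 < ln s^-1 by rewrite ln_gt0 // invf_gt1.
have : (lne (Order.max 1%E (covnum rho A s)) * ((ln s^-1)^-1)%:E < e%:E)%E.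
  by apply: le_lt_trans sup_lt; apply: ereal_sup_ubound; exists s => //=; rewrite s_gt0.
rewrite lte_pdivrMr // -EFinM -lte_expeR lneK ?in_itv /= ?le_max ?lee01 ?leey //.
rewrite lnV ?posrE // mulrN.
rewrite gt_max => /andP[_ /ereal_inf_lt[_ [n An <-]]].
by rewrite lte_fin /powR gt_eqF // mulNr; exists n.
Qed.

End BoxDimension.

Section MarginBands.
Context {R : realType} {X : Type} {rho : X -> X -> R} {Y : Type} (eta : X -> Y).
Hypotheses (rho_metric : is_metric rho) (len_space : length_space rho).
Context {d : nat}.
Hypothesis doubling : doubling_exponent rho d.

Let band t t' := [set x | (t%:E <= margin rho eta x < t'%:E)%E].

Lemma band_ml_cover {t n} : 0 < t -> ball_cover rho (boundary rho eta) (2 * t) n ->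
  ml_cover rho eta (band t (2 * t)) (n * 2 ^ (d * 4)).
Proof.
move=> t_gt0 bd_cover.
have band_near : ball_cover rho (band t (2 * t)) (4 * t) n.
  rewrite (_ : 4 * t = 2 * t + 2 * t); last lra.
  apply: ball_cover_enlarge bd_cover _ => // x /andP[_]; exact: margin_lt_boundary.
have t4_gt0 : 0 < 4 * t by lra.
apply: (ball_cover_ml_cover rho_metric t (ball_cover_halfn doubling 4 t4_gt0 band_near)).
  by move=> x /andP[].
by rewrite -natrX; lra.
Qed.

Section DyadicBands.
Context {e s1 : R}.
Hypothesis small_covers : forall s, 0 < s < s1 ->
  exists2 n, ball_cover rho (boundary rho eta) s n & n%:R < s `^ (- e).

Let P : R := (2 ^ (d * 4))%:R.
Let q : R := 2 `^ (- e).

Lemma dyadic_bands_ml_cover r K : 0 < r -> exists n,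
  ml_cover rho eta
    (band r (2 ^+ K * r) `&` [set x | (margin rho eta x < (s1 / 2)%:E)%E]) n /\
  n%:R <= P * r `^ (- e) * \sum_(k < K) q ^+ k.+1.
Proof.
move=> r_gt0; elim: K => [|K [n [bandK n_le]]].
  exists 0%N; split; last by rewrite big_ord0 mulr0.
  apply: ml_cover_sub ml_cover_set0 => x [/andP[r_le]].
  by rewrite expr0 mul1r => /(le_lt_trans r_le); rewrite ltxx.
have term_ge0 : 0 <= P * r `^ (- e) * q ^+ K.+1.
  by rewrite !mulr_ge0 ?exprn_ge0 ?powR_ge0.
rewrite big_ord_recr /= mulrDr.
have split_band : band r (2 ^+ K.+1 * r) `<=`
    band r (2 ^+ K * r) `|` band (2 ^+ K * r) (2 * (2 ^+ K * r)).
  move=> x /andP[r_le m_lt].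
  have [m_ltK|m_geK] := ltP (margin rho eta x) (2 ^+ K * r)%:E.
    by left; rewrite /band /= r_le m_ltK.
  by right; rewrite /band /= m_geK mulrA -exprS.
have [tau_le|lt_tau] := leP (s1 / 2) (2 ^+ K * r).
  exists n; split; last by rewrite ler_wpDr.
  apply: ml_cover_sub bandK => x [/split_band [//|/andP[m_geK _] m_lt]].
  by move: m_lt => /=; rewrite ltNge (le_trans _ m_geK).
have t_gt0 : 0 < 2 ^+ K * r by rewrite mulr_gt0 ?exprn_gt0.
have [|n2 bd_cover n2_lt] := small_covers (2 * (2 ^+ K * r)).
  by apply/andP; split; lra.
exists (n + n2 * 2 ^ (d * 4))%N; split.
  have := ml_coverU bandK (band_ml_cover t_gt0 bd_cover).
  by apply: ml_cover_sub => x [/split_band [x_in|x_in] m_lt]; [left | right].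
have pow_eq : (2 * (2 ^+ K * r)) `^ (- e) = q ^+ K.+1 * r `^ (- e).
  by rewrite mulrA -exprS powR_pow2M ?ltW.
rewrite natrD natrM lerD // -/P mulrC -mulrA ler_pM2l ?ltr0n ?expn_gt0 //.
by rewrite mulrC -pow_eq ltW.
Qed.

End DyadicBands.

Lemma N_ML_margin_ge_le (x0 : X) (D e : R) : (forall x y, rho x y <= D) ->
  (bdim rho (boundary rho eta) < e%:E)%E ->
  exists C r0 : R, [/\ 0 < C, 0 < r0 & forall r, 0 < r < r0 ->
    (N_ML rho eta [set x | (r%:E <= margin rho eta x)%E] <= (C * r `^ (- e))%:E)%E].
Proof.
move=> rho_le_D bdim_lt.
have e_gt0 : 0 < e by rewrite -lte_fin; exact: le_lt_trans (bdim_ge0 _) bdim_lt.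
have [s1 /andP[s1_gt0 s1_le1] small_covers] := ball_cover_of_bdim_lt bdim_lt.
set tau := s1 / 2; have tau_gt0 : 0 < tau by rewrite divr_gt0.
have tau4_gt0 : 0 < tau / 4 by rewrite divr_gt0.
have [nT top_cover] := bounded_ball_cover rho_metric doubling x0 rho_le_D tau4_gt0.
have top_ml : ml_cover rho eta [set x | (tau%:E <= margin rho eta x)%E] nT.
  apply: (ball_cover_ml_cover rho_metric tau (ball_cover_sub (subsetT _) top_cover)) => //.
  by rewrite /tau; lra.
set P : R := (2 ^ (d * 4))%:R; set q : R := 2 `^ (- e).
have P_gt0 : 0 < P by rewrite ltr0n expn_gt0.
have q01 : 0 <= q < 1.
  rewrite powR_ge0 /q /powR pnatr_eq0 expR_lt1 mulNr oppr_lt0.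
  by rewrite mulr_gt0 // ln_gt0 // ltr1n.
have q_lt1 : 0 < 1 - q by rewrite subr_gt0; case/andP: q01.
exists (nT%:R + P / (1 - q)), tau; split => // [|r /andP[r_gt0 r_lt]].
  by rewrite ltr_wpDl // divr_gt0.
have [K tau_le] := exists_pow2_ge tau r r_gt0.
have [n [bandK n_le]] := dyadic_bands_ml_cover small_covers r K r_gt0.
have cover : ml_cover rho eta [set x | (r%:E <= margin rho eta x)%E] (nT + n).
  apply: ml_cover_sub (ml_coverU top_ml bandK) => x r_le.
  have [tau_le_m|m_lt] := leP tau%:E (margin rho eta x); [by left | right].
  by split => //; rewrite /band /= r_le (lt_le_trans m_lt).
apply: le_trans (N_ML_le_cover cover) _; rewrite lee_fin natrD mulrDl.
have w_ge1 : 1 <= r `^ (- e).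
  rewrite -(powRr0 r) ger_powR ?r_gt0 ?oppr_le0 ?ltW //; rewrite /tau in r_lt; lra.
apply: lerD; first by rewrite ler_peMr.
apply: le_trans n_le _; rewrite mulrAC ler_pM2r ?powR_gt0 // ler_pM2l //.
exact: sum_geometric_le.
Qed.

End MarginBands.

Section Enlargement.
Context {R : realType} {X : Type} {rho : X -> X -> R}.
Hypothesis rho_metric : is_metric rho.

Lemma enlarge_ropen (A : set X) (r : R) : ropen rho (enlarge rho A r).
Proof.
move=> x [z Az zx_lt]; exists (r - rho z x); first by rewrite subr_gt0.
move=> y xy_lt; exists z => //; rewrite /rball /= in xy_lt *.
by have := rho_triangle rho_metric z x y; lra.
Qed.

Lemma mdim_ge0 (nu : set X -> \bar R) (A : set X) :
  (forall B, (0 <= nu B)%E) -> nu A = 0%E -> (0 <= mdim rho nu A)%E.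
Proof.
move=> nu_ge0 nuA0; apply/ereal_infP => _ [d /= d_gt0 <-].
apply: le_trans (ereal_sup_ubound _); last first.
  by exists (d / 2) => //=; apply/andP; split; lra.
by rewrite nuA0 sube0 mule_ge0 // lee_fin invr_ge0; lra.
Qed.

End Enlargement.

Section BoundaryMeasure.
Context {R : realType} {X : pointedType} {rho : X -> X -> R}.
Hypothesis rho_metric : is_metric rho.
Context {Y : countType} (eta : X -> Y).

Lemma margin_lt_measurable (r : R) :
  (forall y : Y, <<s ropen rho >> (eta @^-1` [set y])) ->
  measurable
    ([set x | (margin rho eta x < r%:E)%E] : set (g_sigma_algebraType (ropen rho))).
Proof.
move=> eta_meas.
have -> : [set x | (margin rho eta x < r%:E)%E] =
    \bigcup_(y : Y) (eta @^-1` [set y] `&` enlarge rho [set x' | eta x' <> y] r).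
  apply/seteqP; split => x /=.
    move=> /margin_ltP [x' x'x xx'_lt]; exists (eta x) => //; split => //.
    by exists x' => //; rewrite /rball /= rhoC.
  move=> [_ _ [<- [x' /= x'x x'x_lt]]]; apply/margin_ltP; exists x' => //.
  by rewrite rhoC.
apply: countable_bigcupT_measurable; first exact: countableP.
move=> y; apply: measurableI; first exact: eta_meas.
by apply: sub_sigma_algebra; apply: enlarge_ropen.
Qed.

Lemma measure_margin_lt_le
    (nu : {measure set (g_sigma_algebraType (ropen rho)) -> \bar R}) (c : R) :
  length_space rho -> (forall y : Y, <<s ropen rho >> (eta @^-1` [set y])) ->
  nu (boundary rho eta) = 0%E -> 0 < c ->
  exists2 r0 : R, 0 < r0 & forall r, 0 < r < r0 ->
    (nu [set x | (margin rho eta x < r%:E)%E] <=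
       (mdim rho nu (boundary rho eta) + c%:E) * r%:E)%E.
Proof.
move=> len_space eta_meas nu_bd0 c_gt0; set B := boundary rho eta.
have nu_le r : 0 < r ->
    (nu [set x | (margin rho eta x < r%:E)%E] <= nu (enlarge rho B r))%E.
  move=> r_gt0; apply: le_measure; rewrite ?inE.
  - exact: margin_lt_measurable.
  - by apply: sub_sigma_algebra; apply: enlarge_ropen.
  move=> x /(margin_lt_boundary rho_metric eta x r len_space) [z Bz xz_lt].
  by exists z => //; rewrite /rball /= rhoC.
have : (0 <= mdim rho nu B)%E by apply: mdim_ge0 => //; exact: measure_ge0.
case E : (mdim rho nu B) => [m| |] // _; last first.
  by exists 1 => // r /andP[r_gt0 _]; rewrite addye // mulyr gtr0_sg // mul1e leey.
have : (mdim rho nu B < (m + c)%:E)%E by rewrite E lte_fin ltrDl.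
rewrite /mdim /limsup0 => /ereal_inf_lt[_ [d d_gt0 <-] sup_lt].
exists d => // r /andP[r_gt0 r_lt]; apply: le_trans (nu_le _ r_gt0) _.
rewrite -EFinD -lee_pdivrMr //; apply: le_trans (ltW sup_lt).
by apply: ereal_sup_ubound; exists r; rewrite /= ?r_gt0 // nu_bd0 sube0.
Qed.

End BoundaryMeasure.

Theorem proposition3 (R : realType) (X : pointedType) (rho : X -> X -> R)
  (nu : {measure set (g_sigma_algebraType (ropen rho)) -> \bar R})
  (Y : countType) (eta : X -> Y) :
  is_metric rho -> length_space rho -> bounded_space rho ->
  finite_doubling_dimension rho ->
  (nu setT < +oo)%E ->
  (forall y : Y, <<s ropen rho >> (eta @^-1` [set y])) ->
  nu (boundary rho eta) = 0%E ->
  forall c1 c2 : R, 0 < c1 -> 0 < c2 ->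
  exists C r0 : R, [/\ 0 < C, 0 < r0 &
    forall r : R, 0 < r < r0 ->
      let V := [set x | (r%:E <= margin rho eta x)%E] in
      (N_ML rho eta V <= C%:E * rpowe r (- (bdim rho (boundary rho eta) + c1%:E)))%E /\
      (nu (~` V) <= (mdim rho nu (boundary rho eta) + c2%:E) * r%:E)%E].
Proof.
move=> rho_metric len_space [D rho_le_D] [d doubling] _ eta_meas nu_bd0.
move=> c1 c2 c1_gt0 c2_gt0.
have [rB rB_gt0 nu_le] :=
  measure_margin_lt_le rho_metric eta nu c2 len_space eta_meas nu_bd0 c2_gt0.
have [C [rA [C_gt0 rA_gt0 N_ML_le]]] : exists C rA : R, [/\ 0 < C, 0 < rA &
    forall r, 0 < r < rA -> (N_ML rho eta [set x | (r%:E <= margin rho eta x)%E] <=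
      C%:E * rpowe r (- (bdim rho (boundary rho eta) + c1%:E)))%E].
  case E : (bdim rho _) (bdim_ge0 (rho := rho) (boundary rho eta)) => [b| |] // _.
    have [|C [rA [C_gt0 rA_gt0 N_ML_le]]] :=
      N_ML_margin_ge_le eta rho_metric len_space doubling point D (b + c1) rho_le_D.
      by rewrite E lte_fin ltrDl.
    exists C, rA; split => // r r_in.
    by rewrite -EFinD -EFinN rpoweE ?N_ML_le //; case/andP: r_in.
  by exists 1, 1; split => // r r01; rewrite rpoweNy // mul1e leey.
exists C, (Num.min rA rB); split => [||r]; rewrite ?lt_min ?rA_gt0 ?rB_gt0 //.
move=> /andP[r_gt0 /andP[r_lt_rA r_lt_rB]] V; rewrite setC_margin_ge.
by split; [apply: N_ML_le | apply: nu_le]; rewrite r_gt0.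
Qed.
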